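(* Let $T>0$. Let $g:\mathbb{R}\to\mathbb{R}$ be a continuous, odd, sublinear function, and let $k:\mathbb{R}\to\mathbb{R}$ be a continuous, odd, $T$-periodic function with $\frac{1}{T}\int_0^T k(t)\,dt=0$. Then the equation $$u''+g(u)=k(t)$$ has an odd $T$-periodic solution $u\in C^2(\mathbb{R})$. Moreover, the set of odd $T$-periodic solutions of this equation is bounded in the supremum norm.
   Context: A function $h$ is odd if $h(-x)=-h(x)$ for all $x$. The function $g$ is called sublinear if for every $\varepsilon>0$ there exists $M=M(\varepsilon)>0$ such that $|g(x)|\le M+\varepsilon|x|$ for all $x\in\mathbb{R}$. *)

From Stdlib Require Import Reals.
From Coquelicot Require Import Coquelicot.
Open Scope R_scope.

Definition odd_fun (h : R -> R) : Prop := forall x, h (- x) = - h x.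

Definition sublinear (g : R -> R) : Prop :=
  forall eps, 0 < eps -> exists M, 0 < M /\ forall x, Rabs (g x) <= M + eps * Rabs x.

Definition periodic (T : R) (h : R -> R) : Prop := forall t, h (t + T) = h t.

Definition is_C2_solution (g k u : R -> R) : Prop :=
  (forall t, ex_derive u t) /\
  (forall t, ex_derive (Derive u) t) /\
  (forall t, continuous (Derive (Derive u)) t) /\
  (forall t, Derive (Derive u) t + g (u t) = k t).

Definition is_solution (g k u : R -> R) : Prop :=
  (forall t, ex_derive u t) /\
  (forall t, ex_derive (Derive u) t) /\
  (forall t, Derive (Derive u) t + g (u t) = k t).

From Stdlib Require Import Reals ZArith Lra Lia ClassicalEpsilon Classical.
From Coquelicot Require Import Coquelicot.
Open Scope R_scope.

(* Write T = 2 L.  Since k is odd and 2L-periodic, it is odd about t = L as well, so odd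
   2L-periodic solutions are the solutions on [0, L] vanishing at both ends, extended by oddness
   and periodicity.  Such a u satisfies |u| <= L^2 sup |u''| on [0, L]; with eps = 1 / (4 L^2) in
   the sublinearity bound, sup |u''| <= K0 + M + eps max |u|, which gives the a priori bound
   4 L^2 (K0 + M).
   Since g is only continuous, existence goes through the scheme
   U (i+1) - 2 U i + U (i-1) = h^2 (k (i h) - g (U i)), h = L / N, started from U 0 = 0 and
   U 1 = s h.  U N depends continuously on the slope s, and the discrete version of the a priori
   estimate shows that U N has the sign of s for |s| large, so some slope gives U N = 0.  The
   grid functions obtained this way and their difference quotients are uniformly bounded and
   Lipschitz up to O(h); a diagonal (Arzela-Ascoli) argument extracts a subsequence whose step
   interpolants converge pointwise, and a discrete mean value inequality shows that the limit
   is a C^2 solution, odd and 2L-periodic like the approximations. *)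

Lemma is_derive_of_remainder (f : R -> R) (x l : R) :
  (forall eps, 0 < eps -> exists d, 0 < d /\ forall y, Rabs (y - x) < d ->
      Rabs (f y - f x - (y - x) * l) <= eps * Rabs (y - x)) ->
  is_derive f x l.
Proof.
  intros H. apply is_derive_Reals. intros eps Heps.
  destruct (H (eps / 2) ltac:(lra)) as [d [Hd Hf]].
  exists (mkposreal d Hd). intros y Hy0 Hyd. simpl in Hyd.
  specialize (Hf (x + y)). replace (x + y - x) with y in Hf by ring.
  specialize (Hf Hyd).
  replace ((f (x + y) - f x) / y - l) with ((f (x + y) - f x - y * l) / y) by (field; auto).
  rewrite Rabs_div by auto.
  assert (Hy : 0 < Rabs y) by (apply Rabs_pos_lt; auto).
  apply Rle_lt_trans with (eps / 2); [|lra].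
  apply Rmult_le_reg_r with (Rabs y); auto.
  unfold Rdiv at 1. rewrite Rmult_assoc, Rinv_l by lra. lra.
Qed.

Lemma continuous_eps (f : R -> R) (x : R) : continuous f x ->
  forall eps, 0 < eps -> exists d, 0 < d /\ forall y, Rabs (y - x) <= d -> Rabs (f y - f x) <= eps.
Proof.
  intros H eps he. apply continuity_pt_filterlim in H.
  destruct (H eps he) as [d [hd Hd]]. exists (d / 2). split; [lra|]. intros y hy.
  destruct (Req_dec y x) as [->|hyx].
  - unfold Rminus. rewrite Rplus_opp_r, Rabs_R0. lra.
  - left. apply (Hd y). split; [split; [constructor | auto] | simpl; unfold R_dist; lra].
Qed.

Lemma odd_fun_0 (f : R -> R) : odd_fun f -> f 0 = 0.
Proof. intros Hf. pose proof (Hf 0) as H. rewrite Ropp_0 in H. lra. Qed.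

Lemma floor_mul_near (t h : R) : 0 < h -> t - h < IZR (Zfloor (t / h)) * h <= t.
Proof.
  intros hh. pose proof (Zfloor_bound (t / h)) as [H1 H2].
  apply Rmult_le_compat_r with (r := h) in H1; [|lra].
  apply Rmult_lt_compat_r with (r := h) in H2; [|lra].
  replace (t / h * h) with t in * by (field; lra). lra.
Qed.

Lemma periodic_interval (X : R -> R) (p : R) : 0 < p -> (forall t, X (t + p) = X t) ->
  forall t, exists r, 0 <= r <= p /\ X t = X r.
Proof.
  intros hp H.
  assert (Hn : forall (n : nat) t, X (t + INR n * p) = X t).
  { induction n as [|n IH]; intros t.
    - simpl. rewrite Rmult_0_l, Rplus_0_r. reflexivity.
    - rewrite S_INR. replace (t + (INR n + 1) * p) with ((t + INR n * p) + p) by ring.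
      rewrite H. apply IH. }
  intros t. set (q := Zfloor (t / p)). exists (t - IZR q * p).
  pose proof (floor_mul_near t p hp). split; [fold q in H0; lra|].
  destruct (Z.le_gt_cases 0 q) as [hq|hq].
  - rewrite <- (Hn (Z.to_nat q) (t - IZR q * p)), INR_IZR_INZ, Z2Nat.id by lia. f_equal. ring.
  - rewrite <- (Hn (Z.to_nat (- q)) t), INR_IZR_INZ, Z2Nat.id, opp_IZR by lia.
    f_equal. ring.
Qed.

Lemma Rabs_le_of_odd_periodic (u : R -> R) (L B : R) : 0 < L -> odd_fun u -> periodic (2 * L) u ->
  (forall t, 0 <= t <= L -> Rabs (u t) <= B) -> forall t, Rabs (u t) <= B.
Proof.
  intros hL Hodd Hper HB t.
  destruct (periodic_interval u (2 * L) ltac:(lra) Hper t) as [r [hr ->]].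
  destruct (Rle_or_lt r L) as [hrL|hrL]; [apply HB; lra|].
  replace (u r) with (u (- (2 * L - r))) by (rewrite <- Hper; f_equal; ring).
  rewrite Hodd, Rabs_Ropp. apply HB. lra.
Qed.

Lemma bounded_of_continuous_periodic (f : R -> R) (p : R) : 0 < p ->
  (forall t, continuous f t) -> (forall t, f (t + p) = f t) -> exists K, forall t, Rabs (f t) <= K.
Proof.
  intros hp Hf Hper.
  destruct (continuity_ab_maj (fun t => Rabs (f t)) 0 p ltac:(lra)) as [tm [Htm _]].
  { intros c _. apply (continuity_pt_comp f Rabs); [apply continuity_pt_filterlim, Hf|].
    apply Rcontinuity_abs. }
  exists (Rabs (f tm)). intros t. destruct (periodic_interval f p hp Hper t) as [r [hr ->]].
  apply Htm, hr.
Qed.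

Lemma Rabs_le_of_second_derivative_bound (f : R -> R) (L F : R) : 0 < L ->
  (forall x, ex_derive f x) -> (forall x, ex_derive (Derive f) x) -> f 0 = 0 -> f L = 0 ->
  (forall x, 0 <= x <= L -> Rabs (Derive (Derive f) x) <= F) ->
  forall x, 0 <= x <= L -> Rabs (f x) <= L * L * F.
Proof.
  intros hL Hd1 Hd2 Hf0 HfL HF.
  assert (D1 : forall x, is_derive f x (Derive f x)) by (intros; apply Derive_correct, Hd1).
  assert (D2 : forall x, is_derive (Derive f) x (Derive (Derive f) x))
    by (intros; apply Derive_correct, Hd2).
  assert (C1 : forall x, continuity_pt f x).
  { intros x. apply derivable_continuous_pt. exists (Derive f x). apply is_derive_Reals, D1. }
  assert (C2 : forall x, continuity_pt (Derive f) x).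
  { intros x. apply derivable_continuous_pt. exists (Derive (Derive f) x).
    apply is_derive_Reals, D2. }
  destruct (MVT_gen f 0 L (Derive f) (fun x _ => D1 x) (fun x _ => C1 x)) as [c [hc Hc]].
  rewrite Rmin_left, Rmax_right in hc by lra.
  assert (Hdc : Derive f c = 0) by (rewrite Hf0, HfL in Hc; apply Rmult_eq_reg_r with L; lra).
  assert (HD : forall x, 0 <= x <= L -> Rabs (Derive f x) <= L * F).
  { intros x hx.
    destruct (MVT_gen (Derive f) c x _ (fun y _ => D2 y) (fun y _ => C2 y)) as [y [hy Hy]].
    rewrite Hdc, Rminus_0_r in Hy. rewrite Hy, Rabs_mult, Rmult_comm.
    assert (0 <= y <= L) by (split; [eapply Rle_trans; [|apply hy] | eapply Rle_trans; [apply hy|]];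
      unfold Rmin, Rmax; destruct (Rle_dec c x); lra).
    apply Rmult_le_compat; try apply Rabs_pos; [apply Rabs_le_between; lra | apply HF; auto]. }
  intros x hx.
  destruct (MVT_gen f 0 x (Derive f) (fun y _ => D1 y) (fun y _ => C1 y)) as [y [hy Hy]].
  rewrite Rmin_left, Rmax_right in hy by lra.
  rewrite Hf0, !Rminus_0_r in Hy. rewrite Hy, Rabs_mult, (Rabs_pos_eq x) by lra.
  replace (L * L * F) with (L * F * L) by ring.
  apply Rmult_le_compat; [apply Rabs_pos | lra | apply HD; lra | lra].
Qed.

(** * Functions on the integer lattice *)

Lemma discrete_mvt (X D : Z -> R) (h phi eps : R) (i i0 : Z) :
  0 <= h -> (forall z, X (z + 1)%Z - X z = h * D z) ->
  (forall z, (Z.min i i0 <= z < Z.max i i0)%Z -> Rabs (D z - phi) <= eps) ->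
  Rabs (X i - X i0 - IZR (i - i0) * h * phi) <= Rabs (IZR (i - i0)) * h * eps.
Proof.
  intros hh HX.
  assert (Hfwd : forall a m, (forall z, (a <= z < a + Z.of_nat m)%Z -> Rabs (D z - phi) <= eps) ->
     Rabs (X (a + Z.of_nat m)%Z - X a - INR m * h * phi) <= INR m * h * eps).
  { intros a m. induction m as [|m IH]; intros Hm.
    - rewrite Z.add_0_r. replace (X a - X a - INR 0 * h * phi) with 0 by (simpl; ring).
      rewrite Rabs_R0. simpl. lra.
    - rewrite Nat2Z.inj_succ, S_INR, Z.add_succ_r, <- Z.add_1_r.
      replace (X (a + Z.of_nat m + 1)%Z - X a - (INR m + 1) * h * phi) with
        ((X (a + Z.of_nat m)%Z - X a - INR m * h * phi) + h * (D (a + Z.of_nat m)%Z - phi))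
        by (pose proof (HX (a + Z.of_nat m)%Z); lra).
      eapply Rle_trans; [apply Rabs_triang|]. rewrite Rabs_mult, (Rabs_pos_eq h hh).
      pose proof (IH (fun z hz => Hm z ltac:(lia))).
      pose proof (Rmult_le_compat_l h _ _ hh (Hm (a + Z.of_nat m)%Z ltac:(lia))). lra. }
  intros HD. destruct (Z.le_gt_cases i0 i) as [hi|hi].
  - replace i with (i0 + Z.of_nat (Z.to_nat (i - i0)))%Z at 1 by lia.
    replace (IZR (i - i0)) with (INR (Z.to_nat (i - i0))) by (rewrite INR_IZR_INZ; f_equal; lia).
    rewrite (Rabs_pos_eq (INR _)) by apply pos_INR.
    apply Hfwd. intros z hz. apply HD. lia.
  - pose proof (Hfwd i (Z.to_nat (i0 - i)) ltac:(intros z hz; apply HD; lia)) as H.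
    replace (i + Z.of_nat (Z.to_nat (i0 - i)))%Z with i0 in H by lia.
    replace (IZR (i - i0)) with (- INR (Z.to_nat (i0 - i)))
      by (rewrite INR_IZR_INZ, <- opp_IZR; f_equal; lia).
    rewrite Rabs_Ropp, (Rabs_pos_eq (INR _)) by apply pos_INR.
    rewrite <- Rabs_Ropp. replace (- (X i - X i0 - - INR (Z.to_nat (i0 - i)) * h * phi)) with
      (X i0 - X i - INR (Z.to_nat (i0 - i)) * h * phi) by ring. exact H.
Qed.

Lemma dist_le_of_step_bound (X : Z -> R) (c : R) :
  (forall z, Rabs (X (z + 1)%Z - X z) <= c) ->
  forall i j, Rabs (X i - X j) <= Rabs (IZR (i - j)) * c.
Proof.
  intros H i j.
  pose proof (discrete_mvt X (fun z => X (z + 1)%Z - X z) 1 0 c i j ltac:(lra)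
    ltac:(intros z; cbv beta; ring) ltac:(intros z _; rewrite Rminus_0_r; apply H)) as HM.
  rewrite !Rmult_0_r, Rminus_0_r, Rmult_1_r in HM. exact HM.
Qed.

Lemma step_bound_nonneg (X : Z -> R) (h c : R) : 0 < h ->
  (forall z, Rabs (X (z + 1)%Z - X z) <= h * c) -> 0 <= c.
Proof.
  intros hh HX. pose proof (Rle_trans _ _ _ (Rabs_pos _) (HX 0%Z)).
  destruct (Rle_or_lt 0 c) as [hc|hc]; [exact hc|]. nra.
Qed.

Lemma step_interpolant_equicontinuous (X : Z -> R) (h c : R) : 0 < h ->
  (forall z, Rabs (X (z + 1)%Z - X z) <= h * c) ->
  forall t t', Rabs (X (Zfloor (t / h)) - X (Zfloor (t' / h))) <= c * Rabs (t - t') + h * c.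
Proof.
  intros hh HX t t'.
  pose proof (step_bound_nonneg X h c hh HX) as hc.
  eapply Rle_trans; [apply dist_le_of_step_bound, HX|].
  pose proof (floor_mul_near t h hh). pose proof (floor_mul_near t' h hh).
  assert (Hgap : Rabs (IZR (Zfloor (t / h) - Zfloor (t' / h))) * h <= Rabs (t - t') + h).
  { rewrite <- (Rabs_pos_eq h (Rlt_le _ _ hh)) at 3.
    rewrite <- Rabs_mult, minus_IZR, Rmult_minus_distr_r.
    pose proof (Rle_abs (t - t')). pose proof (Rle_abs (t' - t)).
    rewrite (Rabs_minus_sym t' t) in *.
    apply Rabs_le_between. lra. }
  replace (Rabs (IZR (Zfloor (t / h) - Zfloor (t' / h))) * (h * c)) with
    (Rabs (IZR (Zfloor (t / h) - Zfloor (t' / h))) * h * c) by ring.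
  apply Rmult_le_compat_r with (r := c) in Hgap; [|exact hc]. lra.
Qed.

Lemma periodic_Z_mod (X : Z -> R) (p : Z) : (forall z, X (z + p)%Z = X z) ->
  forall z, X z = X (z mod p)%Z.
Proof.
  intros H.
  assert (Hn : forall (n : nat) z, X (z + p * Z.of_nat n)%Z = X z).
  { induction n as [|n IH]; intros z.
    - rewrite Z.mul_0_r, Z.add_0_r. reflexivity.
    - replace (z + p * Z.of_nat (S n))%Z with ((z + p * Z.of_nat n) + p)%Z by lia.
      rewrite H. apply IH. }
  intros z. destruct (Z.eq_dec p 0) as [->|hp].
  - rewrite Zmod_0_r. reflexivity.
  - rewrite (Z.div_mod z p hp) at 1. rewrite Z.add_comm.
    destruct (Z.le_gt_cases 0 (z / p)) as [hq|hq].
    + rewrite <- (Z2Nat.id (z / p)) by lia. apply Hn.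
    + rewrite <- (Hn (Z.to_nat (- (z / p))) (z mod p + p * (z / p))%Z). f_equal. lia.
Qed.

Lemma Rabs_le_of_periodic_steps (X : Z -> R) (p : Z) (c : R) : (0 < p)%Z ->
  (forall z, X (z + p)%Z = X z) -> (forall z, Rabs (X (z + 1)%Z - X z) <= c) ->
  forall z, Rabs (X z) <= Rabs (X 0%Z) + IZR p * c.
Proof.
  intros hp Hper Hstep z. rewrite (periodic_Z_mod X p Hper z).
  pose proof (Z.mod_pos_bound z p hp).
  pose proof (dist_le_of_step_bound X c Hstep (z mod p) 0) as Hr. rewrite Z.sub_0_r in Hr.
  assert (hc : 0 <= c) by exact (Rle_trans _ _ _ (Rabs_pos _) (Hstep 0%Z)).
  assert (Rabs (IZR (z mod p)) * c <= IZR p * c).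
  { apply Rmult_le_compat_r; [exact hc|]. rewrite Rabs_pos_eq by (apply IZR_le; lia).
    apply IZR_le. lia. }
  pose proof (Rabs_triang_inv (X (z mod p)%Z) (X 0%Z)). lra.
Qed.

Lemma Rabs_le_of_reflection_periodic (U : Z -> R) (N : Z) (B : R) : (0 < N)%Z ->
  (forall z, U (2 * N - z)%Z = - U z) -> (forall z, U (z + 2 * N)%Z = U z) ->
  (forall z, (0 <= z <= N)%Z -> Rabs (U z) <= B) -> forall z, Rabs (U z) <= B.
Proof.
  intros hN Hrefl Hper HB z. rewrite (periodic_Z_mod U _ Hper z).
  pose proof (Z.mod_pos_bound z (2 * N) ltac:(lia)).
  set (r := (z mod (2 * N))%Z) in *.
  destruct (Z.le_gt_cases r N); [apply HB; lia|].
  replace r with (2 * N - (2 * N - r))%Z by lia. rewrite Hrefl, Rabs_Ropp. apply HB. lia.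
Qed.

(** * Extraction of pointwise convergent subsequences *)

Definition inf_often (P : nat -> Prop) : Prop := forall N, exists n, (N <= n)%nat /\ P n.

Lemma inf_often_split (P Q : nat -> Prop) : inf_often P ->
  inf_often (fun n => P n /\ Q n) \/ inf_often (fun n => P n /\ ~ Q n).
Proof.
  intros H. destruct (classic (inf_often (fun n => P n /\ Q n))) as [h|h]; [left; exact h|right].
  apply not_all_ex_not in h as [N1 h1].
  intros N. destruct (H (max N N1)) as [n [hn hP]]. exists n. split; [lia|]. split; [exact hP|].
  intros hQ. apply h1. exists n. split; [lia|auto].
Qed.

Lemma inf_often_ge (P : nat -> Prop) (N0 : nat) : inf_often P ->
  inf_often (fun n => P n /\ (N0 <= n)%nat).
Proof. intros H N. destruct (H (max N N0)) as [n [hn hP]]. exists n. repeat split; auto; lia. Qed.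

Lemma inf_often_cluster (x : nat -> R) (d : R) (m : nat) : 0 <= d ->
  forall a P, inf_often P -> (forall n, P n -> a <= x n <= a + INR m * d) ->
  exists P', (forall n, P' n -> P n) /\ inf_often P' /\
    forall n n', P' n -> P' n' -> Rabs (x n - x n') <= d.
Proof.
  intros hd. induction m as [|m IH]; intros a P HP Hx.
  - exists P. repeat split; auto. intros n n' hn hn'.
    pose proof (Hx n hn). pose proof (Hx n' hn'). simpl in *. apply Rabs_le_between. lra.
  - destruct (inf_often_split P (fun n => x n <= a + d) HP) as [Hl|Hr].
    + exists (fun n => P n /\ x n <= a + d). split; [tauto|]. split; [exact Hl|].
      intros n n' [hn hxn] [hn' hxn']. pose proof (Hx n hn). pose proof (Hx n' hn').
      apply Rabs_le_between. lra.
    + destruct (IH (a + d) _ Hr) as [P' [h1 [h2 h3]]].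
      { intros n [hn hxn]. specialize (Hx n hn). rewrite S_INR in Hx. lra. }
      exists P'. split; [|split; auto]. intros n hn. apply h1; auto.
Qed.

Lemma inf_often_close_on_grid (F : nat -> R -> R) (tau : nat -> R) (B d : R) : 0 < d ->
  (forall n t, Rabs (F n t) <= B) ->
  forall J P, inf_often P -> exists P', (forall n, P' n -> P n) /\ inf_often P' /\
    forall n n', P' n -> P' n' -> forall j, (j <= J)%nat -> Rabs (F n (tau j) - F n' (tau j)) <= d.
Proof.
  intros hd HB.
  assert (Hpoint : forall j P, inf_often P -> exists P', (forall n, P' n -> P n) /\ inf_often P' /\
      forall n n', P' n -> P' n' -> Rabs (F n (tau j) - F n' (tau j)) <= d).
  { intros j P HP. destruct (INR_unbounded (2 * B / d)) as [m hm].
    apply (inf_often_cluster (fun n => F n (tau j)) d m ltac:(lra) (- B) P HP).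
    intros n _. pose proof (HB n (tau j)) as Hn. apply Rabs_le_between in Hn.
    apply Rmult_gt_compat_r with (r := d) in hm; [|lra].
    replace (2 * B / d * d) with (2 * B) in hm by (field; lra). lra. }
  induction J as [|J IH]; intros P HP.
  - destruct (Hpoint 0%nat P HP) as [P' [h1 [h2 h3]]]. exists P'. repeat split; auto.
    intros n n' hn hn' j hj. replace j with 0%nat by lia. auto.
  - destruct (IH P HP) as [P1 [h1 [h2 h3]]].
    destruct (Hpoint (S J) P1 h2) as [P' [h4 [h5 h6]]].
    exists P'. split; [auto|]. split; [exact h5|].
    intros n n' hn hn' j hj. destruct (Nat.eq_dec j (S J)) as [->|hjJ]; [auto|].
    apply h3; auto. lia.
Qed.

Lemma grid_cover (a rho : R) (J : nat) (t : R) : 0 < rho -> a <= t <= a + INR J * rho ->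
  exists j, (j <= J)%nat /\ Rabs (t - (a + INR j * rho)) <= rho.
Proof.
  intros hr. induction J as [|J IH]; intros Ht.
  - exists 0%nat. split; [lia|]. simpl in *. apply Rabs_le_between. lra.
  - rewrite S_INR in Ht. destruct (Rle_dec t (a + INR J * rho)) as [hle|hgt].
    + destruct (IH ltac:(lra)) as [j [hj Hj]]. exists j. split; [lia|exact Hj].
    + exists (S J). split; [lia|]. rewrite S_INR. apply Rabs_le_between. lra.
Qed.

Section Compactness.

Variable F : nat -> R -> R.
Variables B K : R.
Variable e : nat -> R.
Hypothesis F_bounded : forall n t, Rabs (F n t) <= B.
Hypothesis F_equicontinuous : forall n t t', Rabs (F n t - F n t') <= K * Rabs (t - t') + e n.
Hypothesis e_lim : is_lim_seq e 0.
Hypothesis K_ge0 : 0 <= K.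

Lemma inf_often_uniformly_close (d r : R) (P : nat -> Prop) : 0 < d -> inf_often P ->
  exists P', (forall n, P' n -> P n) /\ inf_often P' /\
    forall n n', P' n -> P' n' -> forall t, Rabs t <= r -> Rabs (F n t - F n' t) <= d.
Proof.
  intros hd HP.
  set (rho := d / (6 * (K + 1))).
  assert (hrho : 0 < rho) by (unfold rho; apply Rdiv_lt_0_compat; lra).
  assert (hKrho : K * rho <= d / 6).
  { unfold rho. apply Rmult_le_reg_r with (6 * (K + 1)); [lra|].
    replace (K * (d / (6 * (K + 1))) * (6 * (K + 1))) with (K * d) by (field; lra). nra. }
  apply is_lim_seq_spec in e_lim. destruct (e_lim (mkposreal (d / 6) ltac:(lra))) as [N0 HN0].
  simpl in HN0.
  destruct (INR_unbounded (2 * Rabs r / rho)) as [J hJ].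
  assert (hJ' : 2 * Rabs r <= INR J * rho).
  { apply Rmult_gt_compat_r with (r := rho) in hJ; [|lra].
    replace (2 * Rabs r / rho * rho) with (2 * Rabs r) in hJ by (field; lra). lra. }
  set (tau := fun j => - Rabs r + INR j * rho).
  destruct (inf_often_close_on_grid F tau B (d / 3) ltac:(lra) F_bounded J _ (inf_often_ge P N0 HP))
    as [P' [h1 [h2 h3]]].
  exists P'. split; [intros n hn; apply h1; auto|]. split; [exact h2|].
  intros n n' hn hn' t ht.
  apply Rabs_le_between in ht. pose proof (Rle_abs r).
  destruct (grid_cover (- Rabs r) rho J t hrho ltac:(lra)) as [j [hj Hj]]. fold (tau j) in Hj.
  destruct (h1 n hn) as [_ hnN]. destruct (h1 n' hn') as [_ hnN'].
  pose proof (h3 n n' hn hn' j hj).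
  pose proof (F_equicontinuous n t (tau j)). pose proof (F_equicontinuous n' (tau j) t).
  pose proof (HN0 n hnN). pose proof (HN0 n' hnN'). rewrite Rminus_0_r in *.
  pose proof (Rle_abs (e n)). pose proof (Rle_abs (e n')).
  assert (K * Rabs (t - tau j) <= d / 6)
    by (apply Rle_trans with (K * rho); [apply Rmult_le_compat_l|]; auto).
  assert (K * Rabs (tau j - t) <= d / 6) by (rewrite Rabs_minus_sym; lra).
  replace (F n t - F n' t) with
    ((F n t - F n (tau j)) + (F n (tau j) - F n' (tau j)) + (F n' (tau j) - F n' t)) by ring.
  eapply Rle_trans; [apply Rabs_triang|].
  eapply Rle_trans; [apply Rplus_le_compat_r, Rabs_triang|]. lra.
Qed.

Lemma subsequence_converges_pointwise :
  exists phi : nat -> nat, (forall j, (j <= phi j)%nat) /\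
    forall t, ex_finite_lim_seq (fun j => F (phi j) t).
Proof.
  destruct (choice (fun (Pj : (nat -> Prop) * nat) (P' : nat -> Prop) =>
      inf_often (fst Pj) -> (forall n, P' n -> fst Pj n) /\ inf_often P' /\
      forall n n', P' n -> P' n' -> forall t, Rabs t <= INR (snd Pj) ->
        Rabs (F n t - F n' t) <= / INR (S (snd Pj)))) as [shrink Hshrink].
  { intros [P j]. destruct (classic (inf_often P)) as [HP|HP].
    - destruct (inf_often_uniformly_close (/ INR (S j)) (INR j) P
        ltac:(apply Rinv_0_lt_compat, lt_0_INR; lia) HP) as [P' HP'].
      exists P'. intros _. exact HP'.
    - exists P. intros HP'. contradiction. }
  (* Diagonal argument: [Ps j] are nested infinite sets, the [j]-th shrinking making the [F n]
     [1 / (j + 1)]-close on [[-j, j]], and [phi j] is a member of [Ps (j + 1)] beyond [j]. *)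
  set (Ps := nat_rect (fun _ => nat -> Prop) (fun _ => True) (fun j Sj => shrink (Sj, j))).
  assert (Ps_inf : forall j, inf_often (Ps j)).
  { induction j as [|j IH]. { intros N. exists N. split; [lia|exact I]. }
    apply (Hshrink (Ps j, j) IH). }
  assert (Ps_sub : forall i j n, (i <= j)%nat -> Ps j n -> Ps i n).
  { intros i j n hij. induction hij as [|j hij IH]; [auto|].
    intros hn. apply IH. apply (Hshrink (Ps j, j) (Ps_inf j)). exact hn. }
  destruct (choice (fun j n => (j <= n)%nat /\ Ps (S j) n)) as [phi Hphi].
  { intros j. apply Ps_inf. }
  exists phi. split; [intros j; apply Hphi|]. intros t.
  apply ex_lim_seq_cauchy_corr. intros eps.
  destruct (INR_unbounded (Rmax (Rabs t) (/ eps))) as [N hN].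
  exists N. intros n m hn hm.
  assert (Hclose : forall n n', Ps (S N) n -> Ps (S N) n' ->
      Rabs (F n t - F n' t) <= / INR (S N)).
  { intros n1 n2 h1 h2. apply (proj2 (proj2 (Hshrink (Ps N, N) (Ps_inf N))) n1 n2 h1 h2).
    pose proof (Rmax_l (Rabs t) (/ eps)). simpl. lra. }
  eapply Rle_lt_trans.
  { apply Hclose; [apply (Ps_sub (S N) (S n)) | apply (Ps_sub (S N) (S m))];
      solve [lia | apply Hphi]. }
  pose proof (Rmax_r (Rabs t) (/ eps)). pose proof (cond_pos eps).
  assert (hie : 0 < / eps) by (apply Rinv_0_lt_compat; lra).
  rewrite S_INR, <- (Rinv_inv eps). apply Rinv_0_lt_contravar; lra.
Qed.

End Compactness.

Lemma filterlim_of_ge (phi : nat -> nat) : (forall j, (j <= phi j)%nat) ->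
  filterlim phi eventually eventually.
Proof. intros Hphi P [N HN]. exists N. intros n hn. apply HN. specialize (Hphi n). lia. Qed.

(** * The finite difference scheme *)

Definition discrete_solution (g k : R -> R) (h : R) (U : Z -> R) : Prop :=
  forall z, U (z + 1)%Z - 2 * U z + U (z - 1)%Z = h * h * (k (IZR z * h) - g (U z)).

Definition difference_quotient (h : R) (U : Z -> R) (z : Z) : R := (U (z + 1)%Z - U z) / h.

Lemma difference_quotient_spec (h : R) (U : Z -> R) (z : Z) : h <> 0 ->
  U (z + 1)%Z - U z = h * difference_quotient h U z.
Proof. intros hh. unfold difference_quotient. field. exact hh. Qed.

Lemma difference_quotient_increment (g k : R -> R) (h : R) (U : Z -> R) (z : Z) : h <> 0 ->
  discrete_solution g k h U ->
  difference_quotient h U (z + 1)%Z - difference_quotient h U z =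
    h * (k (IZR (z + 1) * h) - g (U (z + 1)%Z)).
Proof.
  intros hh HU. pose proof (HU (z + 1)%Z) as Hz. replace (z + 1 - 1)%Z with z in Hz by lia.
  unfold difference_quotient. apply Rmult_eq_reg_r with h; [|exact hh].
  rewrite Rmult_minus_distr_r, !Rdiv_def, !Rmult_assoc, Rinv_l by exact hh. lra.
Qed.

Lemma discrete_solution_unique (g k : R -> R) (h : R) (U W : Z -> R) (a : Z) :
  discrete_solution g k h U -> discrete_solution g k h W ->
  U a = W a -> U (a + 1)%Z = W (a + 1)%Z -> forall z, U z = W z.
Proof.
  intros HU HW H0 H1.
  assert (Hfwd : forall m : nat, U (a + Z.of_nat m)%Z = W (a + Z.of_nat m)%Z /\
      U (a + Z.of_nat m + 1)%Z = W (a + Z.of_nat m + 1)%Z).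
  { induction m as [|m [IH1 IH2]]; [rewrite Z.add_0_r; auto|].
    replace (a + Z.of_nat (S m))%Z with (a + Z.of_nat m + 1)%Z by lia. split; [exact IH2|].
    pose proof (HU (a + Z.of_nat m + 1)%Z). pose proof (HW (a + Z.of_nat m + 1)%Z).
    replace (a + Z.of_nat m + 1 - 1)%Z with (a + Z.of_nat m)%Z in * by lia.
    rewrite IH1, IH2 in *. lra. }
  assert (Hbwd : forall m : nat, U (a - Z.of_nat m)%Z = W (a - Z.of_nat m)%Z /\
      U (a - Z.of_nat m + 1)%Z = W (a - Z.of_nat m + 1)%Z).
  { induction m as [|m [IH1 IH2]]; [rewrite Z.sub_0_r; auto|].
    replace (a - Z.of_nat (S m) + 1)%Z with (a - Z.of_nat m)%Z by lia. split; [|exact IH1].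
    pose proof (HU (a - Z.of_nat m)%Z). pose proof (HW (a - Z.of_nat m)%Z).
    replace (a - Z.of_nat m - 1)%Z with (a - Z.of_nat (S m))%Z in * by lia.
    rewrite IH1, IH2 in *. lra. }
  intros z. destruct (Z.le_gt_cases a z).
  - replace z with (a + Z.of_nat (Z.to_nat (z - a)))%Z by lia. apply Hfwd.
  - replace z with (a - Z.of_nat (Z.to_nat (a - z)))%Z by lia. apply Hbwd.
Qed.

(* [t -> 2 L - t], with [L = N h], maps solutions to solutions because [k] is odd and
   [2 L]-periodic; uniqueness for the data at [N] and [N + 1] does the rest. *)
Lemma discrete_solution_reflect (g k : R -> R) (h : R) (U : Z -> R) (N : Z) :
  odd_fun g -> odd_fun k -> (forall t, k (t + 2 * (IZR N * h)) = k t) ->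
  discrete_solution g k h U -> U N = 0 -> forall z, U (2 * N - z)%Z = - U z.
Proof.
  intros Hg Hk Hkp HU HN.
  assert (Hk2L : forall t, k (2 * (IZR N * h) - t) = - k t).
  { intros t. rewrite <- Hk, <- (Hkp (- t)). f_equal. ring. }
  assert (HW : discrete_solution g k h (fun z => - U (2 * N - z)%Z)).
  { intros z. cbv beta. pose proof (HU (2 * N - z)%Z) as Hz.
    replace (2 * N - z + 1)%Z with (2 * N - (z - 1))%Z in Hz by lia.
    replace (2 * N - z - 1)%Z with (2 * N - (z + 1))%Z in Hz by lia.
    rewrite minus_IZR, mult_IZR in Hz. replace ((2 * IZR N - IZR z) * h) with
      (2 * (IZR N * h) - IZR z * h) in Hz by ring.
    rewrite Hk2L in Hz. rewrite Hg. lra. }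
  enough (Heq : forall z, U z = - U (2 * N - z)%Z)
    by (intros z; rewrite (Heq (2 * N - z)%Z); do 2 f_equal; lia).
  apply (discrete_solution_unique g k h _ _ N HU HW).
  - cbv beta. replace (2 * N - N)%Z with N by lia. rewrite HN. lra.
  - cbv beta. pose proof (HU N) as HUN. rewrite HN, (odd_fun_0 g Hg) in HUN.
    pose proof (Hk2L (IZR N * h)) as HkL. replace (2 * (IZR N * h) - IZR N * h) with (IZR N * h)
      in HkL by ring.
    replace (k (IZR N * h)) with 0 in HUN by lra.
    replace (2 * N - (N + 1))%Z with (N - 1)%Z by lia. lra.
Qed.

Fixpoint shoot_pair (g k : R -> R) (h s : R) (n : nat) : R * R :=
  match n with
  | O => (0, s * h)
  | S n' => let p := shoot_pair g k h s n' in
      (snd p, 2 * snd p - fst p + h * h * (k (INR (S n') * h) - g (snd p)))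
  end.

(* The solution of the scheme with [U 0 = 0] and [U 1 = s h], extended oddly to negative indices;
   [shoot_pair n] is [(U n, U (n + 1))]. *)
Definition shoot (g k : R -> R) (h s : R) (z : Z) : R :=
  match z with
  | Z0 => 0
  | Zpos p => fst (shoot_pair g k h s (Pos.to_nat p))
  | Zneg p => - fst (shoot_pair g k h s (Pos.to_nat p))
  end.

Lemma shoot_of_nat (g k : R -> R) (h s : R) (n : nat) :
  shoot g k h s (Z.of_nat n) = fst (shoot_pair g k h s n).
Proof. destruct n; [reflexivity|]. simpl. rewrite SuccNat2Pos.id_succ. reflexivity. Qed.

Lemma shoot_opp (g k : R -> R) (h s : R) (z : Z) : shoot g k h s (- z) = - shoot g k h s z.
Proof. destruct z; simpl; ring. Qed.

Lemma shoot_one (g k : R -> R) (h s : R) : shoot g k h s 1 = s * h.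
Proof. reflexivity. Qed.

Lemma shoot_initial_slope (g k : R -> R) (h s : R) : h <> 0 ->
  difference_quotient h (shoot g k h s) 0%Z = s.
Proof.
  intros hh. unfold difference_quotient. change (0 + 1)%Z with 1%Z. rewrite shoot_one.
  simpl. field. exact hh.
Qed.

Lemma shoot_solution (g k : R -> R) (h s : R) :
  odd_fun g -> odd_fun k -> discrete_solution g k h (shoot g k h s).
Proof.
  intros Hg Hk.
  set (U := shoot g k h s).
  assert (Hpos : forall m : nat, let z := Z.of_nat (S m) in
      U (z + 1)%Z - 2 * U z + U (z - 1)%Z = h * h * (k (IZR z * h) - g (U z))).
  { intros m z. unfold z, U.
    replace (Z.of_nat (S m) + 1)%Z with (Z.of_nat (S (S m))) by lia.
    replace (Z.of_nat (S m) - 1)%Z with (Z.of_nat m) by lia.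
    rewrite !shoot_of_nat, <- INR_IZR_INZ. cbn [shoot_pair fst snd]. ring. }
  intros z. destruct (Z.lt_trichotomy z 0) as [hz|[->|hz]].
  - pose proof (Hpos (Z.to_nat (- z) - 1)%nat) as H. cbv zeta in H.
    replace (Z.of_nat (S (Z.to_nat (- z) - 1))) with (- z)%Z in H by lia.
    replace (- z + 1)%Z with (- (z - 1))%Z in H by lia.
    replace (- z - 1)%Z with (- (z + 1))%Z in H by lia.
    unfold U in *. rewrite !shoot_opp, opp_IZR, Ropp_mult_distr_l_reverse, Hk, Hg in H. lra.
  - change (U 1%Z - 2 * U 0%Z + U (Z.opp 1) = h * h * (k (0 * h) - g 0)).
    unfold U. rewrite shoot_opp, shoot_one, Rmult_0_l, (odd_fun_0 k Hk), (odd_fun_0 g Hg).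
    simpl. ring.
  - pose proof (Hpos (Z.to_nat z - 1)%nat) as H. cbv zeta in H.
    replace (Z.of_nat (S (Z.to_nat z - 1))) with z in H by lia. exact H.
Qed.

Lemma shoot_pair_continuous (g k : R -> R) (h : R) (n : nat) : (forall x, continuous g x) ->
  continuity (fun s => fst (shoot_pair g k h s n)) /\
  continuity (fun s => snd (shoot_pair g k h s n)).
Proof.
  intros Hg. induction n as [|n [IH1 IH2]]; simpl.
  - split; [apply continuity_const; intros ? ?; reflexivity|].
    apply continuity_mult; [apply derivable_continuous, derivable_id|apply continuity_const].
    intros ? ?; reflexivity.
  - split; [exact IH2|].
    apply continuity_plus; [apply continuity_minus; [|exact IH1]|].
    + apply continuity_mult; [apply continuity_const; intros ? ?; reflexivity | exact IH2].
    + apply continuity_mult; [apply continuity_const; intros ? ?; reflexivity|].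
      apply continuity_minus; [apply continuity_const; intros ? ?; reflexivity|].
      intros x. apply (continuity_pt_comp _ g); [apply IH2 | apply continuity_pt_filterlim, Hg].
Qed.

Fixpoint max_abs_upto (a : nat -> R) (n : nat) : R :=
  match n with
  | O => Rabs (a O)
  | S n' => Rmax (max_abs_upto a n') (Rabs (a (S n')))
  end.

Lemma max_abs_upto_ge (a : nat -> R) (n i : nat) : (i <= n)%nat -> Rabs (a i) <= max_abs_upto a n.
Proof.
  induction n as [|n IH]; intros hi; simpl.
  - replace i with O by lia. lra.
  - destruct (Nat.eq_dec i (S n)) as [->|hin]; [apply Rmax_r|].
    eapply Rle_trans; [apply IH; lia | apply Rmax_l].
Qed.

Lemma max_abs_upto_le (a : nat -> R) (n : nat) (X : R) :
  (forall i, (i <= n)%nat -> Rabs (a i) <= X) -> max_abs_upto a n <= X.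
Proof.
  induction n as [|n IH]; intros H; simpl; [apply H; lia|].
  apply Rmax_lub; [apply IH; intros i hi; apply H; lia | apply H; lia].
Qed.

Section Estimates.

Variables g k : R -> R.
Variables L K0 M eps : R.
Variable N : nat.
Hypothesis L_pos : 0 < L.
Hypothesis N_pos : (1 <= N)%nat.
Hypothesis eps_nonneg : 0 <= eps.
Hypothesis eps_small : eps * (L * L) <= / 4.
Hypothesis k_bound : forall t, Rabs (k t) <= K0.
Hypothesis g_bound : forall x, Rabs (g x) <= M + eps * Rabs x.
Hypothesis g_odd : odd_fun g.
Hypothesis k_odd : odd_fun k.

Let h := L / INR N.
Let A := L * L * (K0 + M).

Lemma mesh_pos : 0 < h.
Proof. apply Rdiv_lt_0_compat; [exact L_pos | apply lt_0_INR; lia]. Qed.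

Lemma mesh_mul_N : INR N * h = L.
Proof. unfold h. field. apply not_0_INR. lia. Qed.

Lemma forcing_bound (x : R) (t : R) : Rabs (k t - g x) <= K0 + M + eps * Rabs x.
Proof.
  eapply Rle_trans; [apply Rabs_triang|]. rewrite Rabs_Ropp.
  pose proof (k_bound t). pose proof (g_bound x). lra.
Qed.

Lemma A_nonneg : 0 <= A.
Proof.
  pose proof (Rle_trans _ _ _ (Rabs_pos _) (forcing_bound 0 0)) as H.
  rewrite Rabs_R0, Rmult_0_r, Rplus_0_r in H. unfold A. apply Rmult_le_pos; [nra | exact H].
Qed.

Lemma solution_bound_on_half_period (u : R -> R) :
  is_solution g k u -> u 0 = 0 -> u L = 0 -> forall t, 0 <= t <= L -> Rabs (u t) <= 4 * A.
Proof.
  intros [Hd1 [Hd2 Heq]] Hu0 HuL.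
  pose proof A_nonneg.
  assert (Hcont : forall x, continuity_pt u x).
  { intros x. apply derivable_continuous_pt. exists (Derive u x). apply is_derive_Reals.
    apply Derive_correct, Hd1. }
  destruct (continuity_ab_maj (fun t => Rabs (u t)) 0 L ltac:(lra)) as [tm [Htm htm]].
  { intros c _. apply (continuity_pt_comp u Rabs); [apply Hcont | apply Rcontinuity_abs]. }
  set (m := Rabs (u tm)) in Htm. cbv beta in Htm.
  assert (hm : 0 <= m) by apply Rabs_pos.
  assert (HF : forall x, 0 <= x <= L -> Rabs (Derive (Derive u) x) <= K0 + M + eps * m).
  { intros x hx. replace (Derive (Derive u) x) with (k x - g (u x)) by (pose proof (Heq x); lra).
    eapply Rle_trans; [apply forcing_bound|].
    pose proof (Rmult_le_compat_l eps _ _ eps_nonneg (Htm x hx)). lra. }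
  (* [m <= L^2 (K0 + M + eps m) <= A + m / 4] *)
  pose proof (Rabs_le_of_second_derivative_bound u L _ L_pos Hd1 Hd2 Hu0 HuL HF tm htm) as Hm.
  fold m in Hm. pose proof (Rmult_le_compat_r m _ _ hm eps_small).
  intros t ht. pose proof (Htm t ht). unfold A in *. nra.
Qed.

Lemma mesh_multiple_le (z : Z) : (0 <= z <= Z.of_nat N)%Z -> Rabs (IZR z) * h <= L.
Proof.
  intros hz. rewrite <- mesh_mul_N, Rabs_pos_eq by (apply IZR_le; lia).
  apply Rmult_le_compat_r; [left; apply mesh_pos|]. rewrite INR_IZR_INZ. apply IZR_le. lia.
Qed.

Section FixedSlope.

Variable s : R.
Let U := shoot g k h s.
Let m := max_abs_upto (fun i => U (Z.of_nat i)) N.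
Let F := K0 + M + eps * m.

Lemma shoot_forcing_bound (z : Z) : (0 <= z <= Z.of_nat N)%Z -> Rabs (k (IZR z * h) - g (U z)) <= F.
Proof.
  intros hz. eapply Rle_trans; [apply forcing_bound|]. unfold F.
  rewrite <- (Z2Nat.id z) by lia.
  pose proof (max_abs_upto_ge (fun i => U (Z.of_nat i)) N (Z.to_nat z) ltac:(lia)) as Hm.
  fold m in Hm. pose proof (Rmult_le_compat_l eps _ _ eps_nonneg Hm). lra.
Qed.

Lemma shoot_slope_deviation (z : Z) : (0 <= z <= Z.of_nat N)%Z ->
  Rabs (difference_quotient h U z - s) <= L * F.
Proof.
  intros hz. pose proof mesh_pos as hh.
  pose proof (discrete_mvt (difference_quotient h U)
    (fun z => k (IZR (z + 1) * h) - g (U (z + 1)%Z)) h 0 F z 0 (Rlt_le _ _ hh)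
    (fun z => difference_quotient_increment g k h U z (Rgt_not_eq _ _ hh)
      (shoot_solution g k h s g_odd k_odd))) as H.
  unfold U in H. rewrite (shoot_initial_slope g k h s (Rgt_not_eq _ _ hh)) in H. fold U in H.
  rewrite Z.sub_0_r, Rmult_0_r, Rminus_0_r in H.
  assert (hF : 0 <= F) by exact (Rle_trans _ _ _ (Rabs_pos _) (shoot_forcing_bound 0%Z ltac:(lia))).
  eapply Rle_trans; [apply H|].
  - intros j hj. rewrite Rminus_0_r. apply shoot_forcing_bound. lia.
  - apply Rmult_le_compat_r; [exact hF | exact (mesh_multiple_le z hz)].
Qed.

Lemma shoot_deviation (i : nat) : (i <= N)%nat ->
  Rabs (U (Z.of_nat i) - INR i * h * s) <= A + m / 4.
Proof.
  intros hi. pose proof mesh_pos as hh.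
  pose proof (discrete_mvt U (difference_quotient h U) h s (L * F) (Z.of_nat i) 0 (Rlt_le _ _ hh)
    (fun z => difference_quotient_spec h U z (Rgt_not_eq _ _ hh))
    (fun z hz => shoot_slope_deviation z ltac:(lia))) as H.
  rewrite Z.sub_0_r, <- INR_IZR_INZ in H. change (U 0%Z) with 0 in H. rewrite Rminus_0_r in H.
  eapply Rle_trans; [apply H|].
  pose proof (mesh_multiple_le (Z.of_nat i) ltac:(lia)) as Hi.
  rewrite <- INR_IZR_INZ, (Rabs_pos_eq (INR i)) in Hi by apply pos_INR.
  assert (hm : 0 <= m) by exact (Rle_trans _ _ _ (Rabs_pos _) (max_abs_upto_ge _ N 0 ltac:(lia))).
  assert (hF : 0 <= F) by exact (Rle_trans _ _ _ (Rabs_pos _) (shoot_forcing_bound 0%Z ltac:(lia))).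
  rewrite (Rabs_pos_eq (INR i)) by apply pos_INR.
  apply Rle_trans with (L * (L * F)); [apply Rmult_le_compat_r; [nra | exact Hi]|].
  unfold F, A. pose proof (Rmult_le_compat_r m _ _ hm eps_small). nra.
Qed.

Lemma shoot_end_deviation : Rabs (U (Z.of_nat N) - L * s) <= A + m / 4.
Proof. rewrite <- mesh_mul_N. apply shoot_deviation. lia. Qed.

Lemma shoot_max_bound : 3 * m <= 4 * (L * Rabs s + A).
Proof.
  enough (m <= L * Rabs s + A + m / 4) by lra.
  apply max_abs_upto_le. intros i hi. pose proof (shoot_deviation i hi).
  pose proof (Rabs_triang_inv (U (Z.of_nat i)) (INR i * h * s)).
  assert (Rabs (INR i * h * s) <= L * Rabs s).
  { rewrite Rabs_mult, Rabs_pos_eq by (apply Rmult_le_pos; [apply pos_INR | left; apply mesh_pos]).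
    apply Rmult_le_compat_r; [apply Rabs_pos|]. rewrite <- mesh_mul_N.
    apply Rmult_le_compat_r; [left; apply mesh_pos | apply le_INR; exact hi]. }
  lra.
Qed.

End FixedSlope.

Hypothesis g_cont : forall x, continuous g x.

Lemma shoot_hits_zero : exists s, shoot g k h s (Z.of_nat N) = 0 /\ L * Rabs s <= 2 * A /\
  forall i, (i <= N)%nat -> Rabs (shoot g k h s (Z.of_nat i)) <= 4 * A.
Proof.
  pose proof A_nonneg.
  set (f := fun s => shoot g k h s (Z.of_nat N)).
  assert (hf : continuity f).
  { intros x. apply continuity_pt_filterlim.
    apply (continuous_ext (fun s => fst (shoot_pair g k h s N))).
    { intros s. symmetry. apply shoot_of_nat. }
    apply continuity_pt_filterlim, shoot_pair_continuous, g_cont. }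
  set (S0 := (2 * A + 1) / L).
  assert (hS0 : L * S0 = 2 * A + 1) by (unfold S0; field; lra).
  assert (hS0pos : 0 < S0) by (unfold S0; apply Rdiv_lt_0_compat; lra).
  (* For [L |s| = 2 A + 1], the bounds [|U N - L s| <= A + m / 4] and [3 m <= 4 (L |s| + A)]
     force [U N] to have the sign of [s]. *)
  assert (Hsign : forall s, Rabs s = S0 -> L * s * f s > 0).
  { intros s hs. pose proof (shoot_end_deviation s) as Hend. pose proof (shoot_max_bound s) as Hmax.
    fold (f s) in Hend. rewrite hs in Hmax. apply Rabs_le_between in Hend.
    assert (HLs : Rabs (L * s) = 2 * A + 1) by (rewrite Rabs_mult, Rabs_pos_eq, hs; lra).
    destruct (Rle_or_lt 0 s) as [hs0|hs0];
      [rewrite Rabs_pos_eq in HLs by nra | rewrite Rabs_left in HLs by nra]; nra. }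
  destruct (IVT_cor f (- S0) S0 hf ltac:(lra)) as [s [hs Hs]].
  { pose proof (Hsign S0 ltac:(rewrite Rabs_pos_eq; lra)).
    pose proof (Hsign (- S0) ltac:(rewrite Rabs_Ropp, Rabs_pos_eq; lra)). nra. }
  pose proof (shoot_end_deviation s) as Hend. pose proof (shoot_max_bound s) as Hmax.
  fold (f s) in Hend. rewrite Hs, Rminus_0_l, Rabs_Ropp, Rabs_mult, (Rabs_pos_eq L) in Hend by lra.
  exists s. split; [exact Hs|]. split; [lra|].
  intros i hi.
  pose proof (max_abs_upto_ge (fun i => shoot g k h s (Z.of_nat i)) N i hi). lra.
Qed.

Lemma discrete_step_bound (U : Z -> R) :
  discrete_solution g k h U -> (forall z, U (z + 2 * Z.of_nat N)%Z = U z) ->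
  (forall z, Rabs (U z) <= 4 * A) -> L * Rabs (difference_quotient h U 0%Z) <= 2 * A ->
  forall z, Rabs (U (z + 1)%Z - U z) <= h * (2 * A / L + 2 * L * (K0 + M + eps * (4 * A))).
Proof.
  intros HU Hper Hbound Hs. pose proof mesh_pos as hh.
  set (Fb := K0 + M + eps * (4 * A)).
  set (D := difference_quotient h U) in *.
  assert (HDstep : forall z, Rabs (D (z + 1)%Z - D z) <= h * Fb).
  { intros z. unfold D. rewrite (difference_quotient_increment g k h U z (Rgt_not_eq _ _ hh) HU).
    rewrite Rabs_mult, (Rabs_pos_eq h) by lra. apply Rmult_le_compat_l; [lra|].
    eapply Rle_trans; [apply forcing_bound|]. unfold Fb.
    pose proof (Rmult_le_compat_l eps _ _ eps_nonneg (Hbound (z + 1)%Z)). lra. }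
  assert (HDper : forall z, D (z + 2 * Z.of_nat N)%Z = D z).
  { intros z. unfold D, difference_quotient.
    replace (z + 2 * Z.of_nat N + 1)%Z with ((z + 1) + 2 * Z.of_nat N)%Z by lia.
    rewrite !Hper. reflexivity. }
  assert (HD0 : Rabs (D 0%Z) <= 2 * A / L).
  { apply Rmult_le_reg_l with L; [lra|]. replace (L * (2 * A / L)) with (2 * A) by (field; lra).
    exact Hs. }
  intros z. rewrite (difference_quotient_spec h U z (Rgt_not_eq _ _ hh)), Rabs_mult,
    (Rabs_pos_eq h) by lra.
  apply Rmult_le_compat_l; [lra|]. fold D.
  eapply Rle_trans; [apply (Rabs_le_of_periodic_steps D (2 * Z.of_nat N) (h * Fb));
    [lia | exact HDper | exact HDstep]|].
  rewrite mult_IZR, <- INR_IZR_INZ.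
  replace (2 * INR N * (h * Fb)) with (2 * (INR N * h) * Fb) by ring. rewrite mesh_mul_N. lra.
Qed.

Hypothesis k_periodic : forall t, k (t + 2 * L) = k t.

Lemma discrete_odd_periodic_solution : exists U : Z -> R,
  discrete_solution g k h U /\ (forall z, U (- z)%Z = - U z) /\
  (forall z, U (z + 2 * Z.of_nat N)%Z = U z) /\ (forall z, Rabs (U z) <= 4 * A) /\
  (forall z, Rabs (U (z + 1)%Z - U z) <= h * (2 * A / L + 2 * L * (K0 + M + eps * (4 * A)))).
Proof.
  pose proof mesh_pos as hh.
  destruct shoot_hits_zero as [s [HN [Hs Hb]]].
  set (U := shoot g k h s).
  pose proof (shoot_solution g k h s g_odd k_odd) as HU. fold U in HU.
  assert (Hrefl : forall z, U (2 * Z.of_nat N - z)%Z = - U z).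
  { apply (discrete_solution_reflect g k h U (Z.of_nat N) g_odd k_odd); [|exact HU|exact HN].
    rewrite <- INR_IZR_INZ, mesh_mul_N. exact k_periodic. }
  assert (Hper : forall z, U (z + 2 * Z.of_nat N)%Z = U z).
  { intros z. replace (z + 2 * Z.of_nat N)%Z with (2 * Z.of_nat N - - z)%Z by lia.
    rewrite Hrefl. unfold U. rewrite shoot_opp. ring. }
  assert (Hbound : forall z, Rabs (U z) <= 4 * A).
  { apply (Rabs_le_of_reflection_periodic U (Z.of_nat N)); [lia | exact Hrefl | exact Hper|].
    intros z hz. rewrite <- (Z2Nat.id z) by lia. apply Hb. lia. }
  exists U. split; [exact HU|]. split; [intros z; apply shoot_opp|].
  split; [exact Hper|]. split; [exact Hbound|].
  apply discrete_step_bound; [exact HU | exact Hper | exact Hbound|].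
  unfold U. rewrite (shoot_initial_slope g k h s (Rgt_not_eq _ _ hh)). exact Hs.
Qed.

End Estimates.

(** * Passage to the limit *)

Definition grid_limit (h : nat -> R) (Y : nat -> Z -> R) (t0 w : R) : Prop :=
  forall eps, 0 < eps -> exists d, 0 < d /\
    eventually (fun n => forall j, Rabs (IZR j * h n - t0) <= d -> Rabs (Y n j - w) <= eps).

Lemma eventually_le_of_lim_0 (h : nat -> R) (d : R) : is_lim_seq h 0 -> 0 < d ->
  eventually (fun n => h n <= d).
Proof.
  intros Hh hd. apply is_lim_seq_spec in Hh. destruct (Hh (mkposreal d hd)) as [N HN].
  exists N. intros n hn. specialize (HN n hn). simpl in HN. rewrite Rminus_0_r in HN.
  pose proof (Rle_abs (h n)). lra.
Qed.

Lemma grid_between (h y t0 : R) (z : Z) : 0 < h ->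
  (Z.min (Zfloor (y / h)) (Zfloor (t0 / h)) <= z < Z.max (Zfloor (y / h)) (Zfloor (t0 / h)))%Z ->
  Rabs (IZR z * h - t0) <= Rabs (y - t0) + h.
Proof.
  intros hh Hz.
  pose proof (floor_mul_near y h hh). pose proof (floor_mul_near t0 h hh).
  set (i := Zfloor (y / h)) in *. set (i0 := Zfloor (t0 / h)) in *.
  assert (Hle : forall a b : Z, (a <= b)%Z -> IZR a * h <= IZR b * h)
    by (intros a b hab; apply Rmult_le_compat_r; [lra | apply IZR_le; exact hab]).
  pose proof (Rle_abs (y - t0)). pose proof (Rle_abs (t0 - y)). rewrite (Rabs_minus_sym t0 y) in *.
  apply Rabs_le_between.
  destruct (Z.le_gt_cases i i0) as [hi|hi].
  - rewrite Z.min_l, Z.max_r in Hz by lia.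
    pose proof (Hle i z ltac:(lia)). pose proof (Hle z i0 ltac:(lia)). lra.
  - rewrite Z.min_r, Z.max_l in Hz by lia.
    pose proof (Hle i0 z ltac:(lia)). pose proof (Hle z i ltac:(lia)). lra.
Qed.

Section GridLimits.

Variable h : nat -> R.
Hypothesis h_pos : forall n, 0 < h n.
Hypothesis h_lim : is_lim_seq h 0.

Lemma is_lim_seq_floor_grid (t : R) : is_lim_seq (fun n => IZR (Zfloor (t / h n)) * h n) t.
Proof.
  apply is_lim_seq_le_le with (u := fun n => t - h n) (w := fun _ => t).
  - intros n. pose proof (floor_mul_near t (h n) (h_pos n)). lra.
  - replace (Finite t) with (Rbar_minus t 0) by (simpl; f_equal; ring).
    apply is_lim_seq_minus'; [apply is_lim_seq_const | exact h_lim].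
  - apply is_lim_seq_const.
Qed.

Lemma grid_limit_of_step_bound (Y : nat -> Z -> R) (c t0 w : R) :
  (forall n z, Rabs (Y n (z + 1)%Z - Y n z) <= h n * c) ->
  is_lim_seq (fun n => Y n (Zfloor (t0 / h n))) w -> grid_limit h Y t0 w.
Proof.
  intros Hstep Hlim eps he.
  set (c' := Rabs c + 1).
  assert (hc' : 0 < c') by (unfold c'; pose proof (Rabs_pos c); lra).
  exists (eps / (4 * c')). split; [apply Rdiv_lt_0_compat; lra|].
  apply is_lim_seq_spec in Hlim. destruct (Hlim (mkposreal (eps / 2) ltac:(lra))) as [N1 HN1].
  destruct (eventually_le_of_lim_0 h (eps / (4 * c')) h_lim ltac:(apply Rdiv_lt_0_compat; lra))
    as [N2 HN2].
  exists (max N1 N2). intros n hn j hj. simpl in HN1.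
  set (i0 := Zfloor (t0 / h n)).
  pose proof (floor_mul_near t0 (h n) (h_pos n)). fold i0 in H.
  pose proof (dist_le_of_step_bound (Y n) (h n * c) (Hstep n) j i0) as Hji.
  assert (Hgap : Rabs (IZR (j - i0)) * h n <= 2 * (eps / (4 * c'))).
  { rewrite <- (Rabs_pos_eq (h n)) by (left; apply h_pos). rewrite <- Rabs_mult, minus_IZR.
    rewrite Rmult_minus_distr_r. specialize (HN2 n ltac:(lia)).
    apply Rabs_le_between. apply Rabs_le_between in hj. lra. }
  assert (Hc : Rabs (IZR (j - i0)) * (h n * c) <= eps / 2).
  { replace (Rabs (IZR (j - i0)) * (h n * c)) with (Rabs (IZR (j - i0)) * h n * c) by ring.
    apply Rle_trans with (Rabs (IZR (j - i0)) * h n * c').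
    { apply Rmult_le_compat_l; [apply Rmult_le_pos; [apply Rabs_pos | left; apply h_pos]|].
      unfold c'. pose proof (Rle_abs c). lra. }
    apply Rle_trans with (2 * (eps / (4 * c')) * c'); [apply Rmult_le_compat_r; lra|].
    right. field. lra. }
  replace (Y n j - w) with ((Y n j - Y n i0) + (Y n i0 - w)) by ring.
  eapply Rle_trans; [apply Rabs_triang|]. pose proof (HN1 n ltac:(lia)) as Hw. fold i0 in Hw. lra.
Qed.

Lemma grid_limit_point (t0 : R) : grid_limit h (fun n j => IZR j * h n) t0 t0.
Proof. intros eps he. exists eps. split; [exact he|]. exists 0%nat. auto. Qed.

Lemma grid_limit_comp (f : R -> R) (Y : nat -> Z -> R) (t0 w : R) : continuous f w ->
  grid_limit h Y t0 w -> grid_limit h (fun n j => f (Y n j)) t0 (f w).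
Proof.
  intros Hf HY eps he. destruct (continuous_eps f w Hf eps he) as [d1 [hd1 Hd1]].
  destruct (HY d1 hd1) as [d [hd [N HN]]]. exists d. split; [exact hd|].
  exists N. intros n hn j hj. apply Hd1. apply HN; auto.
Qed.

Lemma grid_limit_minus (Y1 Y2 : nat -> Z -> R) (t0 w1 w2 : R) :
  grid_limit h Y1 t0 w1 -> grid_limit h Y2 t0 w2 ->
  grid_limit h (fun n j => Y1 n j - Y2 n j) t0 (w1 - w2).
Proof.
  intros H1 H2 eps he.
  destruct (H1 (eps / 2) ltac:(lra)) as [d1 [hd1 [N1 HN1]]].
  destruct (H2 (eps / 2) ltac:(lra)) as [d2 [hd2 [N2 HN2]]].
  exists (Rmin d1 d2). split; [apply Rmin_pos; auto|]. exists (max N1 N2). intros n hn j hj.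
  pose proof (HN1 n ltac:(lia) j ltac:(pose proof (Rmin_l d1 d2); lra)).
  pose proof (HN2 n ltac:(lia) j ltac:(pose proof (Rmin_r d1 d2); lra)).
  replace (Y1 n j - Y2 n j - (w1 - w2)) with ((Y1 n j - w1) - (Y2 n j - w2)) by ring.
  eapply Rle_trans; [apply Rabs_triang|]. rewrite Rabs_Ropp. lra.
Qed.

Lemma grid_limit_shift (Y : nat -> Z -> R) (t0 w : R) :
  grid_limit h Y t0 w -> grid_limit h (fun n j => Y n (j + 1)%Z) t0 w.
Proof.
  intros HY eps he. destruct (HY eps he) as [d [hd [N1 HN1]]].
  exists (d / 2). split; [lra|].
  destruct (eventually_le_of_lim_0 h (d / 2) h_lim ltac:(lra)) as [N2 HN2].
  exists (max N1 N2). intros n hn j hj. apply HN1; [lia|].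
  rewrite plus_IZR. specialize (HN2 n ltac:(lia)). pose proof (h_pos n).
  apply Rabs_le_between. apply Rabs_le_between in hj. lra.
Qed.

Lemma is_lim_seq_of_grid_limit (Y : nat -> Z -> R) (t0 w : R) (j : nat -> Z) :
  grid_limit h Y t0 w -> is_lim_seq (fun n => IZR (j n) * h n) t0 ->
  is_lim_seq (fun n => Y n (j n)) w.
Proof.
  intros HY Hj. apply is_lim_seq_spec in Hj. apply is_lim_seq_spec. intros eps.
  destruct (HY (eps / 2) ltac:(pose proof (cond_pos eps); lra)) as [d [hd [N1 HN1]]].
  destruct (Hj (mkposreal d hd)) as [N2 HN2]. exists (max N1 N2). intros n hn.
  eapply Rle_lt_trans; [apply HN1; [lia|]|].
  - left. apply (HN2 n ltac:(lia)).
  - pose proof (cond_pos eps). lra.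
Qed.

Lemma is_derive_of_grid_limit (u v : R -> R) (t0 : R) (X Y : nat -> Z -> R) :
  (forall n z, X n (z + 1)%Z - X n z = h n * Y n z) ->
  (forall t, is_lim_seq (fun n => X n (Zfloor (t / h n))) (u t)) ->
  grid_limit h Y t0 (v t0) -> is_derive u t0 (v t0).
Proof.
  intros HX Hu HY. apply is_derive_of_remainder. intros eps he.
  destruct (HY eps he) as [d [hd [N1 HN1]]].
  exists (d / 2). split; [lra|]. intros y hy.
  set (i := fun n => Zfloor (y / h n)). set (i0 := fun n => Zfloor (t0 / h n)).
  assert (Hgap : is_lim_seq (fun n => IZR (i n - i0 n) * h n) (y - t0)).
  { apply is_lim_seq_ext with (fun n => IZR (i n) * h n - IZR (i0 n) * h n).
    { intros n. rewrite minus_IZR. ring. }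
    apply is_lim_seq_minus'; apply is_lim_seq_floor_grid. }
  enough (Hle : Rbar_le (Rabs (u y - u t0 - (y - t0) * v t0)) (Rabs (y - t0) * eps))
    by (simpl in Hle; lra).
  apply (is_lim_seq_le_loc
    (fun n => Rabs (X n (i n) - X n (i0 n) - IZR (i n - i0 n) * h n * v t0))
    (fun n => Rabs (IZR (i n - i0 n) * h n) * eps)).
  - destruct (eventually_le_of_lim_0 h (d / 2) h_lim ltac:(lra)) as [N2 HN2].
    exists (max N1 N2). intros n hn.
    rewrite Rabs_mult, (Rabs_pos_eq (h n)) by (left; apply h_pos).
    apply (discrete_mvt (X n) (Y n)); [left; apply h_pos | apply HX|].
    intros z hz. apply HN1; [lia|].
    pose proof (grid_between (h n) y t0 z (h_pos n) hz). specialize (HN2 n ltac:(lia)). lra.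
  - apply (is_lim_seq_abs _ (u y - u t0 - (y - t0) * v t0)).
    apply is_lim_seq_minus'; [apply is_lim_seq_minus'; apply Hu|].
    apply is_lim_seq_mult'; [exact Hgap | apply is_lim_seq_const].
  - apply (is_lim_seq_scal_r _ eps (Rabs (y - t0))). apply (is_lim_seq_abs _ (y - t0)). exact Hgap.
Qed.

End GridLimits.

Section DiscreteLimit.

Variables g k : R -> R.
Hypothesis g_cont : forall x, continuous g x.
Hypothesis k_cont : forall t, continuous k t.
Variable h : nat -> R.
Hypothesis h_pos : forall n, 0 < h n.
Hypothesis h_lim : is_lim_seq h 0.
Variable U : nat -> Z -> R.
Variables Db Fb : R.
Hypothesis U_solution : forall n, discrete_solution g k (h n) (U n).
Hypothesis U_step : forall n z, Rabs (U n (z + 1)%Z - U n z) <= h n * Db.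
Hypothesis f_bound : forall n z, Rabs (k (IZR z * h n) - g (U n z)) <= Fb.

Local Notation D n := (difference_quotient (h n) (U n)).

Lemma U_increment n z : U n (z + 1)%Z - U n z = h n * D n z.
Proof. apply difference_quotient_spec, Rgt_not_eq, h_pos. Qed.

Lemma D_increment n z :
  D n (z + 1)%Z - D n z = h n * (k (IZR (z + 1) * h n) - g (U n (z + 1)%Z)).
Proof. apply difference_quotient_increment; [apply Rgt_not_eq, h_pos | apply U_solution]. Qed.

Lemma D_step_bound n z : Rabs (D n (z + 1)%Z - D n z) <= h n * Fb.
Proof.
  rewrite D_increment, Rabs_mult, (Rabs_pos_eq (h n)) by (left; apply h_pos).
  apply Rmult_le_compat_l; [left; apply h_pos | apply f_bound].
Qed.

Lemma D_bound n z : Rabs (D n z) <= Db.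
Proof.
  pose proof (U_step n z) as Hs. rewrite U_increment, Rabs_mult, (Rabs_pos_eq (h n)) in Hs
    by (left; apply h_pos).
  apply Rmult_le_reg_l with (h n); [apply h_pos | exact Hs].
Qed.

Variables u v : R -> R.
Hypothesis u_lim : forall t, is_lim_seq (fun n => U n (Zfloor (t / h n))) (u t).
Hypothesis v_lim : forall t, is_lim_seq (fun n => D n (Zfloor (t / h n))) (v t).

Lemma limit_derive_u t : is_derive u t (v t).
Proof.
  apply (is_derive_of_grid_limit h h_pos h_lim u v t U (fun n => D n) U_increment u_lim).
  exact (grid_limit_of_step_bound h h_pos h_lim _ Fb t (v t) D_step_bound (v_lim t)).
Qed.

Lemma limit_derive_v t : is_derive v t (k t - g (u t)).
Proof.
  apply (is_derive_of_grid_limit h h_pos h_lim v (fun s => k s - g (u s)) t (fun n => D n)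
    (fun n j => k (IZR (j + 1) * h n) - g (U n (j + 1)%Z)) D_increment v_lim).
  apply (grid_limit_shift h h_pos h_lim (fun n j => k (IZR j * h n) - g (U n j))).
  apply grid_limit_minus.
  - exact (grid_limit_comp h k _ t t (k_cont t) (grid_limit_point h t)).
  - exact (grid_limit_comp h g U t (u t) (g_cont (u t))
      (grid_limit_of_step_bound h h_pos h_lim U Db t (u t) U_step (u_lim t))).
Qed.

Lemma limit_C2_solution : is_C2_solution g k u.
Proof.
  assert (Du : forall t, Derive u t = v t) by (intros t; apply is_derive_unique, limit_derive_u).
  assert (DDu : forall t, Derive (Derive u) t = k t - g (u t)).
  { intros t. rewrite (Derive_ext _ _ t Du). apply is_derive_unique, limit_derive_v. }
  split; [|split; [|split]].
  - intros t. exists (v t). apply limit_derive_u.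
  - intros t. apply (ex_derive_ext v); [intros s; rewrite Du; reflexivity|].
    exists (k t - g (u t)). apply limit_derive_v.
  - intros t. apply (continuous_ext (fun s => k s - g (u s)));
      [intros s; rewrite DDu; reflexivity|].
    apply continuity_pt_filterlim, continuity_pt_minus; [apply continuity_pt_filterlim, k_cont|].
    apply (continuity_pt_comp u g); [|apply continuity_pt_filterlim, g_cont].
    apply derivable_continuous_pt. exists (v t). apply is_derive_Reals, limit_derive_u.
  - intros t. rewrite DDu. ring.
Qed.

Lemma limit_odd : (forall n z, U n (- z)%Z = - U n z) -> odd_fun u.
Proof.
  intros HU t.
  assert (Hneg : is_lim_seq (fun n => U n (- Zfloor (t / h n))%Z) (u (- t))).
  { apply (is_lim_seq_of_grid_limit h _ (- t)).
    - exact (grid_limit_of_step_bound h h_pos h_lim U Db (- t) (u (- t)) U_step (u_lim (- t))).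
    - apply is_lim_seq_ext with (fun n => - (IZR (Zfloor (t / h n)) * h n)).
      { intros n. rewrite opp_IZR. ring. }
      apply (is_lim_seq_opp _ t). apply is_lim_seq_floor_grid; assumption. }
  apply is_lim_seq_ext with (v := fun n => - U n (Zfloor (t / h n))) in Hneg; [|intros n; apply HU].
  pose proof (proj1 (is_lim_seq_opp _ _) (u_lim t)) as Hopp.
  apply is_lim_seq_unique in Hneg. rewrite (is_lim_seq_unique _ _ Hopp) in Hneg.
  apply (f_equal real) in Hneg. simpl in Hneg. lra.
Qed.

Lemma limit_periodic (T : R) (p : nat -> Z) :
  (forall n, IZR (p n) * h n = T) -> (forall n z, U n (z + p n)%Z = U n z) -> periodic T u.
Proof.
  intros Hp HU t.
  assert (Hshift : forall n, U n (Zfloor ((t + T) / h n)) = U n (Zfloor (t / h n))).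
  { intros n. replace ((t + T) / h n) with (t / h n + IZR (p n))
      by (rewrite <- (Hp n); field; apply Rgt_not_eq, h_pos).
    rewrite Zfloor_addz. apply HU. }
  pose proof (is_lim_seq_unique _ _ (u_lim (t + T))) as H1.
  rewrite (Lim_seq_ext _ _ Hshift), (is_lim_seq_unique _ _ (u_lim t)) in H1.
  apply (f_equal real) in H1. simpl in H1. auto.
Qed.

End DiscreteLimit.

Lemma C2_solution_of_discrete_solutions (g k : R -> R) (h : nat -> R) (U : nat -> Z -> R)
    (B Db Fb T : R) (p : nat -> Z) :
  (forall x, continuous g x) -> (forall t, continuous k t) ->
  (forall n, 0 < h n) -> is_lim_seq h 0 ->
  (forall n, discrete_solution g k (h n) (U n)) ->
  (forall n z, Rabs (U n z) <= B) ->
  (forall n z, Rabs (U n (z + 1)%Z - U n z) <= h n * Db) ->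
  (forall n z, Rabs (k (IZR z * h n) - g (U n z)) <= Fb) ->
  (forall n z, U n (- z)%Z = - U n z) ->
  (forall n, IZR (p n) * h n = T) -> (forall n z, U n (z + p n)%Z = U n z) ->
  exists u, is_C2_solution g k u /\ odd_fun u /\ periodic T u.
Proof.
  intros Hg Hk Hh Hh0 HU HB Hstep Hf Hodd Hp Hper.
  assert (Hscale : forall (a : nat -> R) c, is_lim_seq a 0 -> is_lim_seq (fun n => a n * c) 0).
  { intros a c Ha. replace (Finite 0) with (Rbar_mult 0 c) by (simpl; f_equal; ring).
    apply is_lim_seq_scal_r, Ha. }
  destruct (subsequence_converges_pointwise (fun n t => U n (Zfloor (t / h n))) B Db
    (fun n => h n * Db) (fun n t => HB n _)
    (fun n => step_interpolant_equicontinuous (U n) (h n) Db (Hh n) (Hstep n)) (Hscale h Db Hh0)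
    (step_bound_nonneg (U 0%nat) (h 0%nat) Db (Hh 0%nat) (Hstep 0%nat))) as [phi1 [Hphi1 HU1]].
  set (h1 := fun j => h (phi1 j)). set (U1 := fun j => U (phi1 j)).
  assert (Hh1 : is_lim_seq h1 0)
    by exact (is_lim_seq_subseq h 0 phi1 (filterlim_of_ge _ Hphi1) Hh0).
  assert (HD1step := D_step_bound g k h1 (fun j => Hh _) U1 Fb (fun j => HU _) (fun j => Hf _)).
  destruct (subsequence_converges_pointwise
    (fun j t => difference_quotient (h1 j) (U1 j) (Zfloor (t / h1 j))) Db Fb (fun j => h1 j * Fb)
    (fun j t => D_bound h1 (fun j => Hh _) U1 Db (fun j => Hstep _) j _)
    (fun j => step_interpolant_equicontinuous _ (h1 j) Fb (Hh _) (HD1step j)) (Hscale h1 Fb Hh1)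
    (step_bound_nonneg _ (h1 0%nat) Fb (Hh _) (HD1step 0%nat))) as [phi2 [Hphi2 HD2]].
  set (h2 := fun j => h1 (phi2 j)). set (U2 := fun j => U1 (phi2 j)).
  set (D2 := fun j t => difference_quotient (h2 j) (U2 j) (Zfloor (t / h2 j))).
  set (u := fun t => real (Lim_seq (fun j => U2 j (Zfloor (t / h2 j))))).
  set (v := fun t => real (Lim_seq (fun j => D2 j t))).
  assert (Hu : forall t, is_lim_seq (fun j => U2 j (Zfloor (t / h2 j))) (u t)).
  { intros t. apply Lim_seq_correct'. destruct (HU1 t) as [l Hl]. exists l.
    exact (is_lim_seq_subseq _ l phi2 (filterlim_of_ge _ Hphi2) Hl). }
  assert (Hv : forall t, is_lim_seq (fun j => D2 j t) (v t))
    by (intros t; apply Lim_seq_correct', HD2).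
  assert (Hh2 : is_lim_seq h2 0)
    by exact (is_lim_seq_subseq h1 0 phi2 (filterlim_of_ge _ Hphi2) Hh1).
  exists u. split; [|split].
  - exact (limit_C2_solution g k Hg Hk h2 (fun j => Hh _) Hh2 U2 Db Fb (fun j => HU _)
      (fun j => Hstep _) (fun j => Hf _) u v Hu Hv).
  - exact (limit_odd h2 (fun j => Hh _) Hh2 U2 Db (fun j => Hstep _) u Hu (fun j => Hodd _)).
  - exact (limit_periodic h2 (fun j => Hh _) U2 u Hu T (fun j => p (phi1 (phi2 j)))
      (fun j => Hp _) (fun j => Hper _)).
Qed.

Lemma is_lim_seq_mesh (L : R) : is_lim_seq (fun n => L / INR (S n)) 0.
Proof.
  replace (Finite 0) with (Rbar_mult L 0) by (simpl; f_equal; ring).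
  apply is_lim_seq_scal_l. rewrite <- is_lim_seq_incr_1 with (u := fun n => / INR n).
  replace (Finite 0) with (Rbar_inv p_infty) by reflexivity.
  apply is_lim_seq_inv; [apply is_lim_seq_INR | discriminate].
Qed.

Lemma odd_periodic_solution_exists (g k : R -> R) (L K0 M eps : R) :
  0 < L -> 0 <= eps -> eps * (L * L) <= / 4 ->
  (forall t, Rabs (k t) <= K0) -> (forall x, Rabs (g x) <= M + eps * Rabs x) ->
  odd_fun g -> odd_fun k -> (forall x, continuous g x) -> (forall t, continuous k t) ->
  (forall t, k (t + 2 * L) = k t) ->
  exists u, is_C2_solution g k u /\ odd_fun u /\ periodic (2 * L) u.
Proof.
  intros hL he heL Hk Hg Hgo Hko Hgc Hkc Hkp.
  set (A := L * L * (K0 + M)).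
  set (Fb := K0 + M + eps * (4 * A)).
  set (h := fun n => L / INR (S n)).
  destruct (choice (fun n (U : Z -> R) =>
    discrete_solution g k (h n) U /\ (forall z, U (- z)%Z = - U z) /\
    (forall z, U (z + 2 * Z.of_nat (S n))%Z = U z) /\ (forall z, Rabs (U z) <= 4 * A) /\
    (forall z, Rabs (U (z + 1)%Z - U z) <= h n * (2 * A / L + 2 * L * Fb)))) as [U HU].
  { intros n. exact (discrete_odd_periodic_solution g k L K0 M eps (S n) hL ltac:(lia) he heL Hk Hg
      Hgo Hko Hgc Hkp). }
  apply (C2_solution_of_discrete_solutions g k h U (4 * A) (2 * A / L + 2 * L * Fb) Fb (2 * L)
    (fun n => 2 * Z.of_nat (S n))%Z Hgc Hkc); try (intros n; apply HU).
  - intros n. apply Rdiv_lt_0_compat; [exact hL | apply lt_0_INR; lia].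
  - apply is_lim_seq_mesh.
  - intros n z. eapply Rle_trans; [apply (forcing_bound g k K0 M eps Hk Hg)|].
    destruct (HU n) as [_ [_ [_ [HUb _]]]].
    pose proof (Rmult_le_compat_l eps _ _ he (HUb z)). unfold Fb. lra.
  - intros n. unfold h. rewrite mult_IZR, <- INR_IZR_INZ. field. apply not_0_INR. lia.
Qed.

Theorem theorem1 (T : R) (g k : R -> R) :
  0 < T ->
  (forall x, continuous g x) -> odd_fun g -> sublinear g ->
  (forall t, continuous k t) -> odd_fun k -> periodic T k ->
  / T * RInt k 0 T = 0 ->
  (exists u : R -> R, is_C2_solution g k u /\ odd_fun u /\ periodic T u) /\
  (exists B : R, forall u : R -> R,
      is_solution g k u -> odd_fun u -> periodic T u ->
      forall t, Rabs (u t) <= B).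
Proof.
  (* The mean value condition on [k] holds automatically for odd [k] and is not needed. *)
  intros hT Hgc Hgo Hgs Hkc Hko Hkp _.
  set (L := T / 2).
  assert (hL : 0 < L) by (unfold L; lra).
  replace T with (2 * L) in * by (unfold L; field).
  destruct (bounded_of_continuous_periodic k (2 * L) ltac:(lra) Hkc Hkp) as [K0 Hk].
  set (eps := / (4 * (L * L))).
  assert (he : 0 < eps) by (unfold eps; apply Rinv_0_lt_compat; nra).
  assert (heL : eps * (L * L) <= / 4) by (unfold eps; right; field; lra).
  destruct (Hgs eps he) as [M [_ Hg]].
  split.
  - exact (odd_periodic_solution_exists g k L K0 M eps hL (Rlt_le _ _ he) heL Hk Hg Hgo Hko
      Hgc Hkc Hkp).
  - exists (4 * (L * L * (K0 + M))). intros u Hs Ho Hp.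
    apply (Rabs_le_of_odd_periodic u L _ hL Ho Hp).
    apply (solution_bound_on_half_period g k L K0 M eps hL (Rlt_le _ _ he) heL Hk Hg u Hs).
    + apply odd_fun_0, Ho.
    + pose proof (Hp (- L)) as H. replace (- L + 2 * L) with L in H by ring. rewrite Ho in H. lra.
Qed.
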